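(* Let $N\in\mathbb{C}^{m\times n}$ have rank $r$ and singular value decomposition $N=U\begin{pmatrix}\Sigma & 0\\ 0 & 0\end{pmatrix}V^{\ast}$, where $\Sigma\in\mathbb{C}^{r\times r}$ is diagonal with positive diagonal entries and $U\in\mathbb{C}^{m\times m}$, $V\in\mathbb{C}^{n\times n}$ are unitary. Let $X\in\mathbb{C}^{m\times m}$ and $Y\in\mathbb{C}^{n\times n}$ be nonsingular, and let $M_{1}=XN$, $M_{2}=NY$. (1) If $X=U\begin{pmatrix}X_{1} & 0\\ X_{2} & X_{4}\end{pmatrix}U^{\ast}$ for some $X_{1}\in\mathbb{C}^{r\times r}$, $X_{2}\in\mathbb{C}^{(m-r)\times r}$, $X_{4}\in\mathbb{C}^{(m-r)\times(m-r)}$, then $$M_{1}^{\dagger}=N^{\dagger}X^{-1}NN^{\dagger}(I+R^{\ast}R)^{-1}(I+R^{\ast}),$$ where $R=XE_{N}X^{-1}(E_{N}-I)$. (2) If $Y=V\begin{pmatrix}Y_{1} & Y_{3}\\ 0 & Y_{4}\end{pmatrix}V^{\ast}$ for some $Y_{1}\in\mathbb{C}^{r\times r}$, $Y_{3}\in\mathbb{C}^{r\times(n-r)}$, $Y_{4}\in\mathbb{C}^{(n-r)\times(n-r)}$, then $$M_{2}^{\dagger}=(I+L^{\ast})(I+LL^{\ast})^{-1}N^{\dagger}NY^{-1}N^{\dagger},$$ where $L=(F_{N}-I)Y^{-1}F_{N}Y$.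
   Context: For a complex matrix $A$, $A^{\ast}$ is its conjugate transpose and $A^{\dagger}$ its Moore--Penrose inverse. $E_{A}:=I-AA^{\dagger}$ and $F_{A}:=I-A^{\dagger}A$. $I$ denotes an identity matrix of the appropriate size. *)

From HB Require Import structures.
From mathcomp Require Import all_boot all_order all_algebra.
From mathcomp Require Import complex.
From mathcomp Require Import reals.
From Stdlib Require Import ClassicalEpsilon.
Set Implicit Arguments. Unset Strict Implicit. Unset Printing Implicit Defensive.
Import Order.TTheory GRing.Theory Num.Theory.
Local Open Scope ring_scope.

Definition ctmx (C : numClosedFieldType) (m n : nat) (A : 'M[C]_(m, n)) : 'M[C]_(n, m) :=
  (map_mx Num.conj A)^T.

Definition is_pinv (C : numClosedFieldType) (m n : nat)
  (A : 'M[C]_(m, n)) (B : 'M[C]_(n, m)) : Prop :=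
  [/\ A *m B *m A = A, B *m A *m B = B,
      ctmx (A *m B) = A *m B & ctmx (B *m A) = B *m A].

(* The Moore--Penrose inverse A^dagger (the unique B with is_pinv A B;
   chosen by Hilbert's epsilon, it always exists). *)
Definition pinv (C : numClosedFieldType) (m n : nat) (A : 'M[C]_(m, n)) : 'M[C]_(n, m) :=
  epsilon (inhabits 0) (fun B => is_pinv A B).

Definition EA (C : numClosedFieldType) (m n : nat) (A : 'M[C]_(m, n)) : 'M[C]_m :=
  1%:M - A *m pinv A.
Definition FA (C : numClosedFieldType) (m n : nat) (A : 'M[C]_(m, n)) : 'M[C]_n :=
  1%:M - pinv A *m A.

Definition unitary_mx (C : numClosedFieldType) (n : nat) (U : 'M[C]_n) : Prop :=
  U *m ctmx U = 1%:M /\ ctmx U *m U = 1%:M.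

From HB Require Import structures.
From mathcomp Require Import all_boot all_order all_algebra.
From mathcomp Require Import complex.
From mathcomp Require Import reals.
From Stdlib Require Import ClassicalEpsilon.
Set Implicit Arguments. Unset Strict Implicit. Unset Printing Implicit Defensive.
Import Order.TTheory GRing.Theory Num.Theory.
Local Open Scope ring_scope.
Local Open Scope complex_scope.

(* Conjugating by the unitary factors of the singular value decomposition
   reduces (1) to N = [S 0; 0 0] and X = [X1 0; X2 X4].  There E_N = [0 0; 0 I],
   R = [0 0; K 0] with K = X2 X1^-1, and X N = [T 0; K T 0] with T = X1 S, a
   full column rank [I; K] times an invertible T; the right-hand side collapses
   to [T^-1 H^-1, T^-1 H^-1 K^*; 0 0] with H = I + K^* K, which satisfies the
   four Penrose equations.  Part (2) is part (1) for N^* and Y^*: the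
   pseudo-inverse of N Y is the conjugate transpose of that of Y^* N^*, and
   E_{N^*} = F_N. *)

Local Ltac block_simpl := repeat progress
  rewrite ?mulmx0 ?mul0mx ?addr0 ?add0r ?subrr ?subr0 ?sub0r ?oppr0 ?opprK
          ?mulmx1 ?mul1mx ?mulmxN ?mulNmx.

Lemma mulmx1_invmx (R : comUnitRingType) n (A B : 'M[R]_n) :
  A *m B = 1%:M -> invmx A = B.
Proof.
by move=> AB1; have [uA _] := mulmx1_unit AB1; rewrite -[RHS](mulKmx uA) AB1 mulmx1.
Qed.

Lemma invmx_lblock (R : comUnitRingType) r p (A : 'M[R]_r) (B : 'M[R]_(p, r)) (D : 'M[R]_p) :
  A \in unitmx -> D \in unitmx ->
  invmx (block_mx A 0 B D) = block_mx (invmx A) 0 (- (invmx D *m B *m invmx A)) (invmx D).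
Proof.
move=> uA uD; apply: mulmx1_invmx; rewrite mulmx_block; block_simpl.
by rewrite !mulmxA !mulmxV // mul1mx subrr -scalar_mx_block.
Qed.

Section ConjugateTranspose.
Variable C : numClosedFieldType.

Lemma ctmxK m n (A : 'M[C]_(m, n)) : ctmx (ctmx A) = A.
Proof. by apply/matrixP => i j; rewrite !mxE conjCK. Qed.

Lemma ctmxM m n k (A : 'M[C]_(m, n)) (B : 'M[C]_(n, k)) :
  ctmx (A *m B) = ctmx B *m ctmx A.
Proof. by rewrite /ctmx map_mxM trmx_mul. Qed.

Lemma ctmx_conj m n k l (P : 'M[C]_(m, n)) (A : 'M[C]_(n, k)) (Q : 'M[C]_(l, k)) :
  ctmx (P *m A *m ctmx Q) = Q *m ctmx A *m ctmx P.
Proof. by rewrite !ctmxM ctmxK mulmxA. Qed.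

Lemma ctmxD m n (A B : 'M[C]_(m, n)) : ctmx (A + B) = ctmx A + ctmx B.
Proof. by rewrite /ctmx map_mxD linearD. Qed.

Lemma ctmxN m n (A : 'M[C]_(m, n)) : ctmx (- A) = - ctmx A.
Proof. by rewrite /ctmx map_mxN linearN. Qed.

Lemma ctmx0 m n : ctmx (0 : 'M[C]_(m, n)) = 0.
Proof. by rewrite /ctmx map_mx0 trmx0. Qed.

Lemma ctmx1 n : ctmx (1%:M : 'M[C]_n) = 1%:M.
Proof. by rewrite /ctmx map_scalar_mx rmorph1 tr_scalar_mx. Qed.

Lemma ctmx_invmx n (A : 'M[C]_n) : ctmx (invmx A) = invmx (ctmx A).
Proof. by rewrite /ctmx map_invmx trmx_inv. Qed.

Lemma unitmx_ctmx n (A : 'M[C]_n) : (ctmx A \in unitmx) = (A \in unitmx).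
Proof. by rewrite /ctmx unitmx_tr map_unitmx. Qed.

Lemma ctmx_block m1 m2 n1 n2 (A : 'M[C]_(m1, n1)) (B : 'M[C]_(m1, n2))
    (D : 'M[C]_(m2, n1)) (E : 'M[C]_(m2, n2)) :
  ctmx (block_mx A B D E) = block_mx (ctmx A) (ctmx D) (ctmx B) (ctmx E).
Proof. by rewrite /ctmx map_block_mx tr_block_mx. Qed.

Lemma mul_ctmx_ge0 n (v : 'rV[C]_n) : 0 <= (v *m ctmx v) 0 0.
Proof. by rewrite mxE; apply: sumr_ge0 => j _; rewrite !mxE mul_conjC_ge0. Qed.

Lemma mul_ctmx_eq0 n (v : 'rV[C]_n) : ((v *m ctmx v) 0 0 == 0) = (v == 0).
Proof.
apply/eqP/eqP => [vv0 | ->]; last by rewrite mul0mx mxE.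
have ge0 (k : 'I_n) : true -> 0 <= v 0 k * ctmx v k 0.
  by rewrite !mxE mul_conjC_ge0.
apply/rowP => j; apply/eqP; rewrite mxE -mul_conjC_eq0.
by rewrite mxE in vv0; have := psumr_eq0P ge0 vv0 (i := j) isT; rewrite !mxE => ->.
Qed.

(* [1 + K^* K] is positive definite: [v (1 + K^* K) v^* = |v|^2 + |v K^*|^2]. *)
Lemma unitmx_1Dctmx_mul p r (K : 'M[C]_(p, r)) : 1%:M + ctmx K *m K \in unitmx.
Proof.
rewrite unitmxE unitfE; apply/negP => /det0P [v nz_v v_ker].
have sum0 : v *m ctmx v + (v *m ctmx K) *m ctmx (v *m ctmx K) = 0.
  by rewrite ctmxM ctmxK -(mul0mx _ (ctmx v)) -v_ker mulmxDr mulmx1 mulmxDl !mulmxA.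
have := congr1 (fun A : 'M[C]_1 => A 0 0) sum0; rewrite /= mxE [RHS]mxE => /eqP.
rewrite paddr_eq0 ?mul_ctmx_ge0 // mul_ctmx_eq0 => /andP [/eqP v0 _].
by rewrite v0 eqxx in nz_v.
Qed.

End ConjugateTranspose.

Section Unitary.
Variable C : numClosedFieldType.
Context {n : nat} {U : 'M[C]_n} (unitaryU : unitary_mx U).

Lemma unitary_unitmx : U \in unitmx.
Proof. by case: unitaryU => /mulmx1_unit[]. Qed.

Lemma unitary_conj1 : U *m 1%:M *m ctmx U = 1%:M.
Proof. by rewrite mulmx1; case: unitaryU. Qed.

Lemma unitary_conj_add1 (A : 'M[C]_n) :
  1%:M + U *m A *m ctmx U = U *m (1%:M + A) *m ctmx U.
Proof. by rewrite mulmxDr mulmxDl unitary_conj1. Qed.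

Lemma unitary_conj_sub1 (A : 'M[C]_n) :
  U *m A *m ctmx U - 1%:M = U *m (A - 1%:M) *m ctmx U.
Proof. by rewrite mulmxBr mulmxBl unitary_conj1. Qed.

Lemma unitary_conjM m a b l (P : 'M[C]_(m, a)) (A : 'M[C]_(a, n))
    (B : 'M[C]_(n, b)) (Q : 'M[C]_(b, l)) :
  P *m A *m ctmx U *m (U *m B *m Q) = P *m (A *m B) *m Q.
Proof. by case: unitaryU => _ UU1; rewrite !mulmxA -(mulmxA _ _ U) UU1 mulmx1. Qed.

Lemma unitmx_unitary_conj (A : 'M[C]_n) :
  (U *m A *m ctmx U \in unitmx) = (A \in unitmx).
Proof. by rewrite !unitmx_mul unitmx_ctmx unitary_unitmx andbT. Qed.

Lemma invmx_unitary_conj (A : 'M[C]_n) :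
  invmx (U *m A *m ctmx U) = U *m invmx A *m ctmx U.
Proof.
have [uA | nuA] := boolP (A \in unitmx).
  by apply: mulmx1_invmx; rewrite unitary_conjM mulmxV // unitary_conj1.
by rewrite !invmx_out // inE unitmx_unitary_conj.
Qed.

End Unitary.

Section PenroseInverse.
Variable C : numClosedFieldType.

Lemma is_pinv_uniq m n (A : 'M[C]_(m, n)) B B' :
  is_pinv A B -> is_pinv A B' -> B = B'.
Proof.
case=> [ABA BAB hAB hBA] [AB'A B'AB' hAB' hB'A].
have A_AB' : ctmx A = ctmx A *m (A *m B') by rewrite -hAB' -ctmxM AB'A.
have BA_A : ctmx A = (B *m A) *m ctmx A by rewrite -hBA -ctmxM mulmxA ABA.
have eB : B = B *m A *m B'.
  rewrite -{1}BAB -mulmxA -hAB ctmxM A_AB'.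
  by rewrite (mulmxA (ctmx B)) -ctmxM hAB !mulmxA BAB.
have eB' : B' = B *m A *m B'.
  rewrite -{1}B'AB' -hB'A ctmxM BA_A -(mulmxA _ (ctmx A)) -ctmxM hB'A.
  by rewrite -!mulmxA (mulmxA B') B'AB'.
by rewrite eB -eB'.
Qed.

Lemma pinv_eq m n (A : 'M[C]_(m, n)) B : is_pinv A B -> pinv A = B.
Proof.
move=> AB; apply: is_pinv_uniq (AB).
exact: epsilon_spec (inhabits 0) (fun B => is_pinv A B) (ex_intro _ B AB).
Qed.

Lemma is_pinv_ctmx m n (A : 'M[C]_(m, n)) B :
  is_pinv A B -> is_pinv (ctmx A) (ctmx B).
Proof.
case=> ABA BAB hAB hBA; split; rewrite -?ctmxM ?mulmxA ?ABA ?BAB //.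
- by rewrite hBA.
- by rewrite hAB.
Qed.

Lemma is_pinv_unitary_conj m n (A : 'M[C]_(m, n)) B U V :
  unitary_mx U -> unitary_mx V -> is_pinv A B ->
  is_pinv (U *m A *m ctmx V) (V *m B *m ctmx U).
Proof.
move=> uU uV [ABA BAB hAB hBA].
have eAB : U *m A *m ctmx V *m (V *m B *m ctmx U) = U *m (A *m B) *m ctmx U.
  by rewrite -[U *m A]mul1mx unitary_conjM // mul1mx mulmxA.
have eBA : V *m B *m ctmx U *m (U *m A *m ctmx V) = V *m (B *m A) *m ctmx V.
  by rewrite -[V *m B]mul1mx unitary_conjM // mul1mx mulmxA.
split.
- by rewrite eAB unitary_conjM // ABA.
- by rewrite eBA unitary_conjM // BAB.
- by rewrite eAB ctmx_conj hAB.
- by rewrite eBA ctmx_conj hBA.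
Qed.

Lemma pinv_unitary_conj m n (A : 'M[C]_(m, n)) U V :
  unitary_mx U -> unitary_mx V -> is_pinv A (pinv A) ->
  pinv (U *m A *m ctmx V) = V *m pinv A *m ctmx U.
Proof. by move=> uU uV hA; apply/pinv_eq/is_pinv_unitary_conj. Qed.

Lemma EA_unitary_conj m n (A : 'M[C]_(m, n)) U V :
  unitary_mx U -> unitary_mx V -> is_pinv A (pinv A) ->
  EA (U *m A *m ctmx V) = U *m EA A *m ctmx U.
Proof.
move=> uU uV hA; rewrite /EA pinv_unitary_conj // unitary_conjM //.
by rewrite mulmxBr mulmxBl unitary_conj1.
Qed.

Lemma is_pinv_block_unit r p q (S : 'M[C]_r) : S \in unitmx ->
  is_pinv (block_mx S 0 0 0 : 'M_(r + p, r + q)) (block_mx (invmx S) 0 0 0).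
Proof.
move=> uS.
have eAB : (block_mx S 0 0 0 : 'M_(r + p, r + q)) *m
           (block_mx (invmx S) 0 0 0 : 'M_(r + q, r + p)) = block_mx 1%:M 0 0 0.
  by rewrite mulmx_block; block_simpl; rewrite mulmxV.
have eBA : (block_mx (invmx S) 0 0 0 : 'M_(r + q, r + p)) *m
           (block_mx S 0 0 0 : 'M_(r + p, r + q)) = block_mx 1%:M 0 0 0.
  by rewrite mulmx_block; block_simpl; rewrite mulVmx.
have hP k : ctmx (block_mx 1%:M 0 0 0 : 'M[C]_(r + k)) = block_mx 1%:M 0 0 0.
  by rewrite ctmx_block !ctmx0 ctmx1.
by split; rewrite ?eAB ?eBA ?hP // mulmx_block; block_simpl.
Qed.

Lemma pinv_block_unit r p q (S : 'M[C]_r) : S \in unitmx ->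
  pinv (block_mx S 0 0 0 : 'M_(r + p, r + q)) = block_mx (invmx S) 0 0 0.
Proof. by move=> uS; apply/pinv_eq/is_pinv_block_unit. Qed.

Lemma is_pinv_pinv_block_unit r p q (S : 'M[C]_r) : S \in unitmx ->
  let D := block_mx S 0 0 0 : 'M_(r + p, r + q) in is_pinv D (pinv D).
Proof. by move=> uS D; rewrite /D pinv_block_unit //; apply: is_pinv_block_unit. Qed.

Lemma is_pinv_svd r p q (S : 'M[C]_r) U V : unitary_mx U -> unitary_mx V -> S \in unitmx ->
  let N := U *m (block_mx S 0 0 0 : 'M_(r + p, r + q)) *m ctmx V in is_pinv N (pinv N).
Proof.
move=> uU uV uS N; have hD := is_pinv_pinv_block_unit p q uS.
by rewrite /N pinv_unitary_conj //; apply: is_pinv_unitary_conj.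
Qed.

(* [block_mx T 0 (K *m T) 0] factors as the full column rank [col_mx 1 K]
   times the invertible [T]. *)
Lemma is_pinv_block_lcol r p q (T : 'M[C]_r) (K : 'M[C]_(p, r)) : T \in unitmx ->
  is_pinv (block_mx T 0 (K *m T) 0 : 'M_(r + p, r + q))
    (block_mx (invmx T *m invmx (1%:M + ctmx K *m K))
              (invmx T *m invmx (1%:M + ctmx K *m K) *m ctmx K) 0 0).
Proof.
move=> uT; set H := 1%:M + ctmx K *m K; set W := invmx H.
have uH : H \in unitmx by apply: unitmx_1Dctmx_mul.
have ctW : ctmx W = W by rewrite ctmx_invmx /H ctmxD ctmx1 ctmxM ctmxK.
have eAB : (block_mx T 0 (K *m T) 0 : 'M_(r + p, r + q)) *m
           (block_mx (invmx T *m W) (invmx T *m W *m ctmx K) 0 0 : 'M_(r + q, r + p))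
         = block_mx W (W *m ctmx K) (K *m W) (K *m W *m ctmx K).
  by rewrite mulmx_block; block_simpl; rewrite !mulmxA !mulmxV // !mul1mx !mulmxK.
have W_H : invmx T *m W *m T + invmx T *m W *m ctmx K *m (K *m T) = 1%:M.
  rewrite !mulmxA -mulmxDl -(mulmxA _ (ctmx K)) -[X in X + _]mulmx1 -mulmxDr.
  by rewrite mulmxKV // mulVmx.
have eBA : (block_mx (invmx T *m W) (invmx T *m W *m ctmx K) 0 0 : 'M_(r + q, r + p)) *m
           (block_mx T 0 (K *m T) 0 : 'M_(r + p, r + q)) = block_mx 1%:M 0 0 0.
  by rewrite mulmx_block; block_simpl; rewrite W_H.
split.
- by rewrite -mulmxA eBA mulmx_block; block_simpl.
- by rewrite eBA mulmx_block; block_simpl.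
- by rewrite eAB ctmx_block !ctmxM !ctmxK ctW !mulmxA.
- by rewrite eBA ctmx_block !ctmx0 ctmx1.
Qed.

End PenroseInverse.

Section LeftMultiplication.
Variable C : numClosedFieldType.

Definition pinv_lmul_R {m n} (N : 'M[C]_(m, n)) (X : 'M[C]_m) : 'M[C]_m :=
  X *m EA N *m invmx X *m (EA N - 1%:M).

Definition pinv_lmul_formula {m n} (N : 'M[C]_(m, n)) (X : 'M[C]_m) : 'M[C]_(n, m) :=
  let R := pinv_lmul_R N X in
  pinv N *m invmx X *m N *m pinv N *m invmx (1%:M + ctmx R *m R) *m (1%:M + ctmx R).

Lemma pinv_lmul_formula_unitary_conj m n (D : 'M[C]_(m, n)) (X : 'M[C]_m) U V :
  unitary_mx U -> unitary_mx V -> is_pinv D (pinv D) ->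
  pinv_lmul_formula (U *m D *m ctmx V) (U *m X *m ctmx U)
  = V *m pinv_lmul_formula D X *m ctmx U.
Proof.
move=> uU uV hD.
have eR : pinv_lmul_R (U *m D *m ctmx V) (U *m X *m ctmx U)
          = U *m pinv_lmul_R D X *m ctmx U.
  rewrite /pinv_lmul_R EA_unitary_conj // invmx_unitary_conj //.
  by rewrite unitary_conj_sub1 // !unitary_conjM.
rewrite /pinv_lmul_formula eR pinv_unitary_conj // invmx_unitary_conj //.
rewrite ctmx_conj !unitary_conjM // !unitary_conj_add1 // invmx_unitary_conj //.
by rewrite !unitary_conjM.
Qed.

Section LowerTriangularBlocks.
Variables (r p q : nat) (S X1 : 'M[C]_r) (X2 : 'M[C]_(p, r)) (X4 : 'M[C]_p).
Hypotheses (uS : S \in unitmx) (uX1 : X1 \in unitmx) (uX4 : X4 \in unitmx).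
Local Notation D := (block_mx S 0 0 0 : 'M[C]_(r + p, r + q)).
Local Notation X := (block_mx X1 0 X2 X4 : 'M[C]_(r + p)).
Local Notation K := (X2 *m invmx X1).

Lemma EA_block_unit : EA D = block_mx 0 0 0 1%:M.
Proof.
rewrite /EA pinv_block_unit // mulmx_block; block_simpl.
by rewrite mulmxV // (scalar_mx_block r p) opp_block_mx add_block_mx subrr !subr0.
Qed.

Lemma pinv_lmul_R_block : pinv_lmul_R D X = block_mx 0 0 K 0.
Proof.
rewrite /pinv_lmul_R EA_block_unit invmx_lblock // (scalar_mx_block r p).
rewrite opp_block_mx add_block_mx !mulmx_block; block_simpl.
by rewrite !mulmxA mulmxV // mul1mx.
Qed.

Lemma pinv_lmul_formula_block :
  let H := 1%:M + ctmx K *m K in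
  pinv_lmul_formula D X
  = block_mx (invmx (X1 *m S) *m invmx H) (invmx (X1 *m S) *m invmx H *m ctmx K) 0 0.
Proof.
move=> H; have uH : H \in unitmx by apply: unitmx_1Dctmx_mul.
rewrite /pinv_lmul_formula pinv_lmul_R_block pinv_block_unit // invmx_lblock //.
rewrite ctmx_block !ctmx0 (scalar_mx_block r p) !mulmx_block; block_simpl.
rewrite !add_block_mx; block_simpl.
rewrite -/H invmx_lblock ?unitmx1 // invmx1 !mulmx_block; block_simpl.
have -> : invmx (X1 *m S) = invmx S *m invmx X1.
  by apply: mulmx1_invmx; rewrite mulmxA mulmxK // mulmxV.
by rewrite !mulmxK.
Qed.

Lemma is_pinv_lmul_block : is_pinv (X *m D) (pinv_lmul_formula D X).
Proof.
have -> : X *m D = block_mx (X1 *m S) 0 (K *m (X1 *m S)) 0.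
  by rewrite mulmx_block; block_simpl; rewrite mulmxA mulmxKV.
by rewrite pinv_lmul_formula_block; apply: is_pinv_block_lcol; rewrite unitmx_mul uX1.
Qed.

End LowerTriangularBlocks.

Lemma is_pinv_lmul r p q (N : 'M[C]_(r + p, r + q)) U V S X X1 X2 X4 :
  unitary_mx U -> unitary_mx V -> S \in unitmx ->
  N = U *m block_mx S 0 0 0 *m ctmx V ->
  X \in unitmx -> X = U *m block_mx X1 0 X2 X4 *m ctmx U ->
  is_pinv (X *m N) (pinv_lmul_formula N X).
Proof.
move=> uU uV uS -> uX eX.
have uX' : block_mx X1 0 X2 X4 \in unitmx by rewrite -(unitmx_unitary_conj uU) -eX.
have [uX1 uX4] : X1 \in unitmx /\ X4 \in unitmx.
  by move: uX'; rewrite !unitmxE det_lblock unitrM => /andP.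
rewrite eX pinv_lmul_formula_unitary_conj //; last exact: is_pinv_pinv_block_unit.
rewrite unitary_conjM //; apply: is_pinv_unitary_conj => //.
exact: is_pinv_lmul_block.
Qed.

End LeftMultiplication.

Section RightMultiplication.
Variable C : numClosedFieldType.

Definition pinv_rmul_L {m n} (N : 'M[C]_(m, n)) (Y : 'M[C]_n) : 'M[C]_n :=
  (FA N - 1%:M) *m invmx Y *m FA N *m Y.

Definition pinv_rmul_formula {m n} (N : 'M[C]_(m, n)) (Y : 'M[C]_n) : 'M[C]_(n, m) :=
  let L := pinv_rmul_L N Y in
  (1%:M + ctmx L) *m invmx (1%:M + L *m ctmx L) *m pinv N *m N *m invmx Y *m pinv N.

Section Adjoint.
Context {m n : nat} {N : 'M[C]_(m, n)} (hN : is_pinv N (pinv N)).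

Lemma pinv_ctmx : pinv (ctmx N) = ctmx (pinv N).
Proof. exact/pinv_eq/is_pinv_ctmx. Qed.

Lemma ctmx_FA : ctmx (FA N) = FA N.
Proof. by case: hN => _ _ _ hNN; rewrite /FA ctmxD ctmxN ctmx1 hNN. Qed.

Lemma EA_ctmx : EA (ctmx N) = FA N.
Proof. by rewrite /EA pinv_ctmx -ctmxM -ctmxN -ctmx1 -ctmxD ctmx_FA. Qed.

Lemma pinv_rmul_formula_ctmx (Y : 'M[C]_n) :
  pinv_rmul_formula N Y = ctmx (pinv_lmul_formula (ctmx N) (ctmx Y)).
Proof.
have eR : pinv_lmul_R (ctmx N) (ctmx Y) = ctmx (pinv_rmul_L N Y).
  rewrite /pinv_lmul_R /pinv_rmul_L EA_ctmx !ctmxM ctmx_FA ctmx_invmx.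
  by rewrite ctmxD ctmxN ctmx1 ctmx_FA !mulmxA.
rewrite /pinv_lmul_formula /pinv_rmul_formula eR pinv_ctmx.
move: (pinv_rmul_L N Y) => L.
by rewrite !ctmxM !ctmxK !ctmx_invmx !ctmxD !ctmx1 !ctmxM !ctmxK !mulmxA.
Qed.

End Adjoint.

Lemma is_pinv_rmul r p q (N : 'M[C]_(r + p, r + q)) U V S Y Y1 Y3 Y4 :
  unitary_mx U -> unitary_mx V -> S \in unitmx ->
  N = U *m block_mx S 0 0 0 *m ctmx V ->
  Y \in unitmx -> Y = V *m block_mx Y1 Y3 0 Y4 *m ctmx V ->
  is_pinv (N *m Y) (pinv_rmul_formula N Y).
Proof.
move=> uU uV uS eN uY eY.
have hN : is_pinv N (pinv N) by rewrite eN; apply: is_pinv_svd.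
rewrite pinv_rmul_formula_ctmx // -[N *m Y]ctmxK ctmxM; apply: is_pinv_ctmx.
apply: (is_pinv_lmul (S := ctmx S) (X1 := ctmx Y1) (X2 := ctmx Y3) (X4 := ctmx Y4) uV uU).
- by rewrite unitmx_ctmx.
- by rewrite eN ctmx_conj ctmx_block !ctmx0.
- by rewrite unitmx_ctmx.
- by rewrite eY ctmx_conj ctmx_block ctmx0.
Qed.

End RightMultiplication.

(* The rank hypothesis follows from the factorisation of [N] and is unused; of the
   positivity of [d] only [d 0 i != 0] is needed. *)
Theorem theorem3p1 (R : realType) (r p q : nat)
  (N : 'M[R[i]]_(r + p, r + q))
  (U : 'M[R[i]]_(r + p)) (V : 'M[R[i]]_(r + q)) (d : 'rV[R[i]]_r)
  (X : 'M[R[i]]_(r + p)) (Y : 'M[R[i]]_(r + q)) :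
  \rank N = r ->
  (forall i, 0 < d 0 i) ->
  unitary_mx U -> unitary_mx V ->
  N = U *m block_mx (diag_mx d) 0 0 0 *m ctmx V ->
  X \in unitmx -> Y \in unitmx ->
  ((exists (X1 : 'M[R[i]]_r) (X2 : 'M[R[i]]_(p, r)) (X4 : 'M[R[i]]_p),
       X = U *m block_mx X1 0 X2 X4 *m ctmx U) ->
    let M1 := X *m N in
    let Rm := X *m EA N *m invmx X *m (EA N - 1%:M) in
    pinv M1 = pinv N *m invmx X *m N *m pinv N
                *m invmx (1%:M + ctmx Rm *m Rm) *m (1%:M + ctmx Rm))
  /\
  ((exists (Y1 : 'M[R[i]]_r) (Y3 : 'M[R[i]]_(r, q)) (Y4 : 'M[R[i]]_q),
       Y = V *m block_mx Y1 Y3 0 Y4 *m ctmx V) ->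
    let M2 := N *m Y in
    let L := (FA N - 1%:M) *m invmx Y *m FA N *m Y in
    pinv M2 = (1%:M + ctmx L) *m invmx (1%:M + L *m ctmx L)
                *m pinv N *m N *m invmx Y *m pinv N).
Proof.
move=> _ d_gt0 uU uV eN uX uY.
have uS : diag_mx d \in unitmx.
  by rewrite unitmxE det_diag unitfE; apply/prodf_neq0 => i _; rewrite lt0r_neq0.
split=> [[X1 [X2 [X4 eX]]] | [Y1 [Y3 [Y4 eY]]]] M RX.
- exact/pinv_eq/(is_pinv_lmul uU uV uS eN uX eX).
- exact/pinv_eq/(is_pinv_rmul uU uV uS eN uY eY).
Qed.
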